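(* Let $n \ge 0$ and let $\mathcal{A}$ be a UFA with $n$ states over a finite alphabet $\Sigma$ that recognizes a language $L \subseteq \Sigma^*$. Then there exists a UFA with at most $\sqrt{n+1} \cdot 2^{n/2}$ states that recognizes the language $\Sigma^* \setminus L$.
   Context: An NFA is a quintuple $\mathcal{A} = (Q,\Sigma,\delta,I,F)$ with $Q$ a finite set of states, $\Sigma$ a finite alphabet, $\delta \subseteq Q \times \Sigma \times Q$ the transition relation, $I \subseteq Q$ the initial states and $F \subseteq Q$ the accepting states. A run on $w = a_1\cdots a_m$ is a sequence $q_0 \xrightarrow{a_1} q_1 \cdots \xrightarrow{a_m} q_m$ with $(q_{i-1},a_i,q_i)\in\delta$; it is accepting if $q_0 \in I$ and $q_m \in F$. $L(\mathcal{A})$ is the set of words having an accepting run. A UFA (unambiguous finite automaton) is an NFA in which every word $w \in \Sigma^*$ has at most one accepting run. A UFA recognizes $L$ if $L(\mathcal{A}) = L$. *)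

From Stdlib Require Export Reals.
From mathcomp Require Import all_boot.
Set Implicit Arguments. Unset Strict Implicit. Unset Printing Implicit Defensive.

Record nfa (Sigma : finType) := NFA {
  state : finType;
  delta : state -> Sigma -> state -> bool;
  init  : {set state};
  final : {set state} }.

(* [is_run A q w qs]: q = q0 --a1--> q1 ... --am--> qm is a run on w = a1..am,
   where qs = [:: q1; ...; qm]. *)
Fixpoint is_run (Sigma : finType) (A : nfa Sigma) (q : state A)
  (w : seq Sigma) (qs : seq (state A)) : bool :=
  match w, qs with
  | [::], [::] => true
  | a :: w', q' :: qs' => delta q a q' && is_run q' w' qs'
  | _, _ => false
  end.

Definition accepting_run (Sigma : finType) (A : nfa Sigma) (w : seq Sigma)
  (r : state A * seq (state A)) : bool :=
  [&& r.1 \in init A, is_run r.1 w r.2 & last r.1 r.2 \in final A].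

Arguments accepting_run {Sigma} A w r.

Definition accepts (Sigma : finType) (A : nfa Sigma) (w : seq Sigma) : Prop :=
  exists r, accepting_run A w r.

Definition unambiguous (Sigma : finType) (A : nfa Sigma) : Prop :=
  forall w r1 r2, accepting_run A w r1 -> accepting_run A w r2 -> r1 = r2.

From Stdlib Require Import Reals Lra.
From mathcomp Require Import all_boot zify.
Set Implicit Arguments. Unset Strict Implicit. Unset Printing Implicit Defensive.

(* Let R be the family of sets of states reachable from the initial states by
   reading some word u, and C the family of "co-reachable" sets, i.e. the sets
   reachable by a word in the reversed automaton.  Two constructions give
   unambiguous automata for the complement:
   - the subset automaton restricted to R, accepting the sets disjoint from
     the final states, is deterministic and has #|R| states;
   - the reverse of the same construction applied to the reversed automaton
     is co-deterministic and has #|C| states.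
   Unambiguity forces #|S :&: T| <= 1 for S in R and T in C (a common state
   of the two sets would lie on two accepting runs of the same word).  A
   purely combinatorial lemma bounds such cross-intersecting families:
   #|R| * #|C| <= 2^n * (n+1), by coding each pair (S, T) injectively by its
   symmetric difference together with a label in {0, ..., n}.  Hence the
   smaller of the two automata has at most sqrt(2^n * (n+1)) states. *)

Section Runs.
Variables (Sigma : finType) (A : nfa Sigma).
Local Notation Q := (state A).

Lemma run_size (q : Q) w qs : is_run q w qs -> size qs = size w.
Proof. by elim: w q qs => [|a w IH] q [|q' qs] //= /andP[_ /IH ->]. Qed.

Lemma run_cat (q : Q) u v qs qs' :
  is_run q u qs -> is_run (last q qs) v qs' -> is_run q (u ++ v) (qs ++ qs').
Proof.
elim: u q qs => [|a u IH] q [|q1 qs] //= /andP[-> run_qs] run_qs'.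
exact: IH.
Qed.

Lemma run_rcons (q : Q) w a qs q' :
  is_run q (rcons w a) (rcons qs q') = is_run q w qs && delta (last q qs) a q'.
Proof.
elim: w q qs => [|b w IH] q [|q1 qs] //=; rewrite ?andbT //.
- by case: qs => [|? ?]; rewrite andbF.
- by case: w {IH} => [|? ?]; rewrite andbF.
by rewrite IH andbA.
Qed.
End Runs.

Section Reversal.
Variables (Sigma : finType) (A : nfa Sigma).
Local Notation Q := (state A).

Definition rev_nfa : nfa Sigma :=
  @NFA Sigma Q (fun q a q' => delta q' a q) (final A) (init A).

(* The run q0 ... qm read backwards, as the pair (qm, [:: q(m-1); ...; q0]). *)
Definition rev_run (r : Q * seq Q) : Q * seq Q :=
  (last r.1 r.2, rev (belast r.1 r.2)).

Lemma rev_run_cons (r : Q * seq Q) : (rev_run r).1 :: (rev_run r).2 = rev (r.1 :: r.2).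
Proof. by rewrite [in RHS]lastI rev_rcons. Qed.

Lemma rev_runK : involutive rev_run.
Proof.
move=> [q qs]; case E: (rev_run (rev_run (q, qs))) => [q' qs'].
by have := rev_run_cons (rev_run (q, qs)); rewrite E (rev_run_cons (q, qs)) revK => -[-> ->].
Qed.

Lemma is_run_rev w (r : Q * seq Q) :
  is_run (A := rev_nfa) (rev_run r).1 (rev w) (rev_run r).2 = is_run r.1 w r.2.
Proof.
case: r => q qs; rewrite /rev_run /=.
elim: w q qs => [|a w IH] q [|q1 qs] //=; rewrite !rev_cons.
- by case: (rev _) => [|? ?].
- by case: (rev w) => [|? ?].
rewrite run_rcons IH andbC; congr (_ && _).
by have /(congr1 fst) /= -> := rev_runK (q1, qs).
Qed.

Lemma accepting_run_rev w (r : Q * seq Q) :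
  accepting_run rev_nfa (rev w) (rev_run r) = accepting_run A w r.
Proof.
have last_rev_run : last (rev_run r).1 (rev_run r).2 = r.1 := congr1 fst (rev_runK r).
rewrite /accepting_run last_rev_run is_run_rev /=.
by case: (r.1 \in init A); case: (last _ _ \in final A); rewrite ?andbF.
Qed.

Lemma accepts_rev w : accepts rev_nfa (rev w) <-> accepts A w.
Proof.
split=> [[r acc_r]|[r acc_r]].
  by exists (rev_run r); rewrite -accepting_run_rev rev_runK.
by exists (rev_run r); rewrite accepting_run_rev.
Qed.

Lemma unambiguous_rev : unambiguous A -> unambiguous rev_nfa.
Proof.
move=> unambA w r1 r2; rewrite -[w]revK -[r1]rev_runK -[r2]rev_runK !accepting_run_rev.
by move=> acc1 acc2; rewrite (unambA _ _ _ acc1 acc2).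
Qed.
End Reversal.

Section ComplementDFA.
Variables (Sigma : finType) (A : nfa Sigma).
Local Notation Q := (state A).

Definition step (S : {set Q}) (a : Sigma) : {set Q} :=
  [set q' | [exists q in S, delta q a q']].

Definition reach (w : seq Sigma) : {set Q} := foldl step (init A) w.

Lemma foldl_stepP (S : {set Q}) w q' :
  reflect (exists q qs, [/\ q \in S, is_run q w qs & last q qs = q'])
          (q' \in foldl step S w).
Proof.
elim: w S => [|a w IH] S /=.
  apply: (iffP idP) => [q'S|[q [[|? ?] [qS _ <-]]]] //; by exists q', [::].
apply: (iffP (IH _)) => [[q1 [qs [q1S run_qs <-]]]|[q [[|q1 qs] [qS //= /andP[dq run_qs] <-]]]].
  move: q1S; rewrite inE => /exists_inP[q qS dq].
  by exists q, (q1 :: qs); rewrite /= dq run_qs.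
exists q1, qs; split=> //; rewrite inE; apply/exists_inP; by exists q.
Qed.

Lemma accepts_reach w : accepts A w <-> ~~ [disjoint reach w & final A].
Proof.
rewrite -setI_eq0; split.
  move=> [[q qs] /and3P[qI run_qs lastF]]; apply/set0Pn; exists (last q qs).
  by rewrite inE lastF andbT; apply/foldl_stepP; exists q, qs.
move=> /set0Pn[q']; rewrite inE => /andP[/foldl_stepP[q [qs [qI run_qs <-]]] lastF].
by exists (q, qs); apply/and3P.
Qed.

Definition succ_set : rel {set Q} := fun S S' => [exists a, S' == step S a].

Definition reachable_sets : {set {set Q}} := [set S | connect succ_set (init A) S].

Lemma reachable_setsP S : S \in reachable_sets -> exists w, S = reach w.
Proof.
rewrite inE /reach => /connectP[p path_p ->] {S}.
elim: p (init A) path_p => [|S p IH] S0 /=; first by exists [::].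
move=> /andP[/existsP[a /eqP ->] /IH[w ->]]; by exists (a :: w).
Qed.

Lemma reachable_init : init A \in reachable_sets.
Proof. by rewrite inE connect0. Qed.

Lemma reachable_step S a : S \in reachable_sets -> step S a \in reachable_sets.
Proof.
rewrite !inE => reachS; apply: connect_trans reachS _.
by apply: connect1; apply/existsP; exists a.
Qed.

Definition reachable_state : finType := {S : {set Q} | S \in reachable_sets}.

Definition compl_dfa : nfa Sigma :=
  @NFA Sigma reachable_state
    (fun (x : reachable_state) a (y : reachable_state) => sval y == step (sval x) a)
    [set x : reachable_state | sval x == init A]
    [set x : reachable_state | [disjoint sval x & final A]].

Lemma compl_dfa_run (x : state compl_dfa) w ys :
  is_run x w ys -> sval (last x ys) = foldl step (sval x) w.
Proof.
elim: w x ys => [|a w IH] x [|y ys] //= /andP[/eqP step_y /IH ->].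
by rewrite step_y.
Qed.

Lemma compl_dfa_total (x : state compl_dfa) w : exists ys, is_run x w ys.
Proof.
elim: w x => [|a w IH] x; first by exists [::].
pose y : state compl_dfa := exist _ (step (sval x) a) (reachable_step a (valP x)).
by have [ys run_ys] := IH y; exists (y :: ys); rewrite /= eqxx.
Qed.

Lemma compl_dfa_det (x : state compl_dfa) w ys1 ys2 :
  is_run x w ys1 -> is_run x w ys2 -> ys1 = ys2.
Proof.
elim: w x ys1 ys2 => [|a w IH] x [|y1 ys1] [|y2 ys2] //=.
move=> /andP[/eqP step_y1 run1] /andP[/eqP step_y2 run2].
have eq_y : y1 = y2 by apply: val_inj => /=; rewrite step_y1 step_y2.
by subst y2; rewrite (IH _ _ _ run1 run2).
Qed.

Lemma compl_dfa_unambiguous : unambiguous compl_dfa.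
Proof.
move=> w [x1 ys1] [x2 ys2] /and3P[/= + run1 _] /and3P[/= + run2 _].
rewrite !inE => /eqP init1 /eqP init2.
have eq_x : x1 = x2 by apply: val_inj => /=; rewrite init1 init2.
by subst x2; rewrite (compl_dfa_det run1 run2).
Qed.

Lemma compl_dfa_accepts w : accepts compl_dfa w <-> ~ accepts A w.
Proof.
rewrite accepts_reach; split.
  move=> [[x ys] /and3P[/= + run_ys +]]; rewrite !inE (compl_dfa_run run_ys).
  by move=> /eqP init_x; rewrite /reach -init_x => ->.
move=> /negP; rewrite negbK => disj.
pose x0 : state compl_dfa := exist _ (init A) reachable_init.
have [ys run_ys] := compl_dfa_total x0 w.
by exists (x0, ys); rewrite /accepting_run /= !inE eqxx run_ys (compl_dfa_run run_ys).
Qed.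

Lemma card_compl_dfa : #|state compl_dfa| = #|reachable_sets|.
Proof. by rewrite card_sig; apply: eq_card. Qed.
End ComplementDFA.

Section Unambiguity.
Variables (Sigma : finType) (A : nfa Sigma).
Local Notation Q := (state A).

Lemma run_through_reach_rev u v (q : Q) :
  q \in reach A u :&: reach (rev_nfa A) v ->
  exists p ps gs, [/\ accepting_run A (u ++ rev v) (p, ps ++ gs),
                      size ps = size u & last p ps = q].
Proof.
rewrite inE => /andP[/foldl_stepP[p [ps [pI run_ps last_ps]]]].
move=> /(@foldl_stepP _ (rev_nfa A))[f [fs [fF run_fs last_fs]]].
have := @is_run_rev _ A (rev v) (rev_run (f, fs)); rewrite rev_runK revK run_fs => run_gs.
have last_gs : last (rev_run (f, fs)).1 (rev_run (f, fs)).2 = f := congr1 fst (rev_runK (f, fs)).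
exists p, ps, (rev_run (f, fs)).2; split; rewrite ?(run_size run_ps) //.
apply/and3P; split=> //=; last by rewrite last_cat last_ps -last_fs last_gs.
by apply: run_cat run_ps _; rewrite last_ps -last_fs.
Qed.

Lemma reach_rev_le1 u v : unambiguous A -> #|reach A u :&: reach (rev_nfa A) v| <= 1.
Proof.
move=> unambA; apply/card_le1_eqP=> q1 q2.
move=> /run_through_reach_rev[p1 [ps1 [gs1 [acc1 size1 <-]]]].
move=> /run_through_reach_rev[p2 [ps2 [gs2 [acc2 size2 <-]]]].
case: (unambA _ _ _ acc1 acc2) => -> /eqP.
by rewrite eqseq_cat ?size1 ?size2 // => /andP[/eqP -> _].
Qed.
End Unambiguity.

Section CrossIntersectingFamilies.
Variable X : finType.
Implicit Types (S T V D : {set X}) (u p : X).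

(* Symmetric difference; a pair (S, T) is recovered from S and symdiff S T. *)
Definition symdiff S T : {set X} := (S :\: T) :|: (T :\: S).

Lemma in_symdiff S T u : (u \in symdiff S T) = ((u \in S) != (u \in T)).
Proof. by rewrite !inE; case: (u \in S); case: (u \in T). Qed.

Lemma symdiffK S T : symdiff S (symdiff S T) = T.
Proof. by apply/setP=> u; rewrite !in_symdiff; case: (u \in S); case: (u \in T). Qed.

Lemma card_le1_cases D : #|D| <= 1 -> D = set0 \/ exists u, D = [set u].
Proof.
rewrite leq_eqVlt ltnS leqn0 cards_eq0 => /orP[/cards1P|/eqP]; by [right|left].
Qed.

Lemma setD_sub_cross S1 T1 S2 T2 : symdiff S1 T1 = symdiff S2 T2 ->
  S1 :\: S2 \subset (S1 :&: T1) :|: (S1 :&: T2).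
Proof.
move=> eqV; apply/subsetP=> u; rewrite !inE => /andP[uS2 uS1].
have := congr1 (fun V => u \in V) eqV; rewrite /= !in_symdiff uS1 (negbTE uS2).
by case: (u \in T1); case: (u \in T2).
Qed.

Lemma common_point_sub S1 T1 S2 T2 p : symdiff S1 T1 = symdiff S2 T2 ->
  #|S1 :&: T1| <= 1 -> #|S1 :&: T2| <= 1 ->
  p \in S1 :&: T1 -> p \in S2 :&: T2 -> S1 \subset S2.
Proof.
move=> eqV le11 le12 pST1 pST2; apply/subsetP=> u uS1; apply/negPn/negP=> uS2.
have /(subsetP (setD_sub_cross eqV)) uI : u \in S1 :\: S2 by rewrite inE uS2.
have pST12 : p \in S1 :&: T2 by move: pST1 pST2; rewrite !inE => /andP[-> _] /andP[_ ->].
have eq_up : u = p.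
  by case/setUP: uI => uI; [apply: (card_le1_eqP le11)|apply: (card_le1_eqP le12)].
by move: pST2; rewrite -eq_up inE (negbTE uS2).
Qed.

Definition weight V D : nat := \sum_(u in D) (index u (enum V)).+1.

Lemma weight_lt V D : D \subset V -> #|D| <= 1 -> weight V D < #|V|.+1.
Proof.
move=> DV /card_le1_cases[->|[u eqD]]; first by rewrite /weight big_set0.
move: DV; rewrite /weight eqD big_set1 sub1set ltnS cardE index_mem.
by rewrite mem_enum.
Qed.

Lemma weight_inj V D1 D2 : D1 \subset V -> D2 \subset V ->
  #|D1| <= 1 -> #|D2| <= 1 -> weight V D1 = weight V D2 -> D1 = D2.
Proof.
move=> + + /card_le1_cases[|[u]] eqD1 /card_le1_cases[|[v]] eqD2;
  rewrite eqD1 eqD2 /weight ?big_set0 ?big_set1 ?sub1set //.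
by move=> uV vV [/(index_inj u) ->]; rewrite ?mem_enum.
Qed.

Lemma subset_symdiff S T : S :&: T = set0 -> S \subset symdiff S T.
Proof.
move=> /setP disjST; apply/subsetP=> u uS; rewrite in_symdiff uS.
by have := disjST u; rewrite !inE uS /= => ->.
Qed.

Lemma disjoint_pairs_sub S1 T1 S2 T2 :
  S1 :&: T1 = set0 -> S2 :&: T2 = set0 -> symdiff S1 T1 = symdiff S2 T2 ->
  #|S1 :&: T2| <= 1 -> #|S2 :&: T1| <= 1 ->
  weight (symdiff S1 T1) S1 = weight (symdiff S1 T1) S2 %[mod #|symdiff S1 T1|.+1] ->
  S1 \subset S2.
Proof.
set V := symdiff S1 T1 => disj1 disj2 eqV le12 le21.
have D12sub : S1 :\: S2 \subset S1 :&: T2 by rewrite -[S1 :&: T2]set0U -disj1 setD_sub_cross.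
have D21sub : S2 :\: S1 \subset S2 :&: T1 by rewrite -[S2 :&: T1]set0U -disj2 setD_sub_cross.
have le_D12 := leq_trans (subset_leq_card D12sub) le12.
have le_D21 := leq_trans (subset_leq_card D21sub) le21.
have D12V : S1 :\: S2 \subset V := subset_trans (subsetDl _ _) (subset_symdiff disj1).
have D21V : S2 :\: S1 \subset V by rewrite eqV; exact: subset_trans (subsetDl _ _) (subset_symdiff disj2).
rewrite /weight (big_setID S2) [in X in _ = X](big_setID S1) /= setIC => /eqP.
rewrite eqn_modDl !modn_small ?weight_lt // => /eqP /weight_inj.
move=> /(_ D12V D21V le_D12 le_D21) eqD.
apply/subsetP=> u uS1; apply/negPn/negP=> uS2.
have : u \in S1 :\: S2 by rewrite inE uS2.
by rewrite eqD inE uS1.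
Qed.
Definition label S T : nat :=
  let V := symdiff S T in
  if [pick p in S :&: T] is Some p then #|V|.+1 + index p (enum (~: V))
  else weight V S %% #|V|.+1.

Lemma common_notin_symdiff S T p : p \in S :&: T -> p \in ~: symdiff S T.
Proof. by rewrite in_setC in_symdiff in_setI => /andP[-> ->]. Qed.

Lemma label_lt S T : label S T < #|X|.+1.
Proof.
rewrite /label; case: pickP => [p /common_notin_symdiff pV|_].
  have := cardsC (symdiff S T).
  have : index p (enum (~: symdiff S T)) < #|~: symdiff S T|.
    by rewrite cardE index_mem mem_enum.
  lia.
by rewrite (leq_trans (ltn_pmod _ _)) ?ltnS ?max_card.
Qed.

Lemma nomem_set0 D : (forall p, (p \in D) = false) -> D = set0.
Proof. by move=> noD; apply/setP=> p; rewrite inE noD. Qed.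

Lemma label_inj S1 T1 S2 T2 : symdiff S1 T1 = symdiff S2 T2 ->
  #|S1 :&: T1| <= 1 -> #|S2 :&: T2| <= 1 -> #|S1 :&: T2| <= 1 -> #|S2 :&: T1| <= 1 ->
  label S1 T1 = label S2 T2 -> S1 = S2.
Proof.
move=> eqV le11 le22 le12 le21; rewrite /label -eqV.
case: pickP => [p1 p1I|/nomem_set0 disj1]; case: pickP => [p2 p2I|/nomem_set0 disj2].
- move=> /eqP; rewrite eqn_add2l => /eqP eq_idx.
  have eq_p : p1 = p2.
    apply: (index_inj p1 _ _ eq_idx); rewrite mem_enum; last rewrite eqV;
      exact: common_notin_symdiff.
  rewrite -{}eq_p in p2I.
  by apply/eqP; rewrite eqEsubset (common_point_sub eqV le11 le12 p1I p2I)
                        (common_point_sub (esym eqV) le22 le21 p2I p1I).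
- by move=> eq_lab; have := ltn_pmod (weight (symdiff S1 T1) S2) (ltn0Sn #|symdiff S1 T1|); lia.
- by move=> eq_lab; have := ltn_pmod (weight (symdiff S1 T1) S1) (ltn0Sn #|symdiff S1 T1|); lia.
move=> eq_mod; apply/eqP; rewrite eqEsubset (disjoint_pairs_sub disj1 disj2 eqV le12 le21 eq_mod).
by rewrite (disjoint_pairs_sub disj2 disj1 (esym eqV) le21 le12) -?eqV.
Qed.

Lemma card_cross_small (SS TT : {set {set X}}) :
  (forall S T, S \in SS -> T \in TT -> #|S :&: T| <= 1) ->
  #|SS| * #|TT| <= 2 ^ #|X| * #|X|.+1.
Proof.
move=> cross.
pose code (ST : {set X} * {set X}) := (symdiff ST.1 ST.2, inord (label ST.1 ST.2) : 'I_#|X|.+1).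
have code_inj : {in setX SS TT &, injective code}.
  move=> [S1 T1] [S2 T2]; rewrite !inE /= => /andP[S1in T1in] /andP[S2in T2in] [eqV].
  move=> /(congr1 val); rewrite /= !inordK ?label_lt // => eq_lab.
  have eqS := label_inj eqV (cross _ _ S1in T1in) (cross _ _ S2in T2in)
                (cross _ _ S1in T2in) (cross _ _ S2in T1in) eq_lab.
  by rewrite -(symdiffK S1 T1) -(symdiffK S2 T2) eqV eqS.
rewrite -cardsX -(card_in_imset code_inj) (leq_trans (max_card _)) //.
by rewrite card_prod card_ord -cardsT -powersetT card_powerset cardsT.
Qed.
End CrossIntersectingFamilies.

Section NumericBound.
Local Open Scope R_scope.

Lemma INR_expn (m n : nat) : INR (m ^ n)%N = INR m ^ n.
Proof. by elim: n => [|n IH] //; rewrite expnS mult_INR IH. Qed.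

Lemma Rpower_half (n : nat) : Rpower 2 (INR n / 2) = sqrt (2 ^ n).
Proof.
rewrite -Rpower_pow; last lra.
by rewrite -Rpower_sqrt ?Rpower_mult //; apply: exp_pos.
Qed.

Lemma sqrt_bound (m n : nat) : (m * m <= 2 ^ n * n.+1)%N ->
  INR m <= sqrt (INR (n + 1)) * Rpower 2 (INR n / 2).
Proof.
move=> /leP /le_INR; rewrite !mult_INR INR_expn (_ : INR 2 = 2) => [le_mn|]; last by rewrite /=; lra.
rewrite Rpower_half addn1 -sqrt_mult; [|exact: pos_INR|by apply: pow_le; lra].
rewrite -(sqrt_square (INR m)); last exact: pos_INR.
by apply: sqrt_le_1_alt; rewrite Rmult_comm.
Qed.
End NumericBound.

Theorem theorem1 (Sigma : finType) (n : nat) (A : nfa Sigma)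
  (L : seq Sigma -> Prop) :
  #|state A| = n -> unambiguous A -> (forall w, accepts A w <-> L w) ->
  exists B : nfa Sigma,
    unambiguous B /\ (forall w, accepts B w <-> ~ L w) /\
    Rle (INR #|state B|)
        (Rmult (sqrt (INR (n + 1))) (Rpower (IZR 2) (Rdiv (INR n) (IZR 2)))).
Proof.
move=> cardA unambA langA.
pose SS := reachable_sets A; pose TT := reachable_sets (rev_nfa A).
have cross S T : S \in SS -> T \in TT -> #|S :&: T| <= 1.
  by move=> /reachable_setsP[u ->] /reachable_setsP[v ->]; exact: reach_rev_le1.
have count := card_cross_small cross; rewrite cardA in count.
suff [B [unambB langB sizeB]] : exists B : nfa Sigma, [/\ unambiguous B,
    forall w, accepts B w <-> ~ accepts A w & #|state B| * #|state B| <= 2 ^ n * n.+1].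
  exists B; split=> //; split; last exact: sqrt_bound.
  by move=> w; have := langB w; have := langA w; tauto.
have [le_ST|lt_TS] := leqP #|SS| #|TT|.
- exists (compl_dfa A); split; [exact: compl_dfa_unambiguous|exact: compl_dfa_accepts|].
  by rewrite card_compl_dfa (leq_trans _ count) // leq_mul.
exists (rev_nfa (compl_dfa (rev_nfa A))); split.
- exact/unambiguous_rev/compl_dfa_unambiguous.
- move=> w; have := accepts_rev (compl_dfa (rev_nfa A)) (rev w).
  have := compl_dfa_accepts (rev_nfa A) (rev w); have := accepts_rev A w.
  rewrite revK; tauto.
by rewrite card_compl_dfa (leq_trans _ count) // leq_mul // ltnW.
Qed.
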